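(* Let $\mathcal{C}_1$ be an $[n,k_1,d_1]_2$ binary linear code that is even-like, let $\mathcal{C}_2$ be the $[n,1,n]_2$ repetition code generated by the all-ones vector $\mathbf{1}_n$, and let $\mathcal{C}=\{(\mathbf{u},\mathbf{u}+\mathbf{v}):\ \mathbf{u}\in\mathcal{C}_1,\ \mathbf{v}\in\mathcal{C}_2\}$. Then $\mathcal{C}$ is a $[2n,k_1+1,\min\{2d_1,n\}]_2$ code with $\dim(\mathrm{Hull}_E(\mathcal{C}))=k_1$ if $n$ is odd and $\dim(\mathrm{Hull}_E(\mathcal{C}))=k_1+1$ if $n$ is even.
   Context: A vector $\mathbf{x}\in\mathbb{F}_2^n$ is even-like if $\sum_i x_i=0$ and odd-like otherwise; a binary code is even-like if all its codewords are even-like, and odd-like otherwise. $\mathrm{Hull}_E(\mathcal{C})=\mathcal{C}\cap\mathcal{C}^{\perp_E}$ where $\mathcal{C}^{\perp_E}$ is the dual with respect to $(\mathbf{x},\mathbf{y})_E=\sum_ix_iy_i$. An $[n,k,d]_2$ code is a $k$-dimensional subspace of $\mathbb{F}_2^n$ with minimum distance $d$. *)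

From HB Require Import structures.
From mathcomp Require Import all_boot all_order all_algebra.
Set Implicit Arguments. Unset Strict Implicit. Unset Printing Implicit Defensive.
Import Order.TTheory GRing.Theory.
Local Open Scope ring_scope.

Notation vecF2 n := 'rV['F_2]_n.

Definition edot n (x y : vecF2 n) : 'F_2 := \sum_(i < n) x 0 i * y 0 i.

Definition wt n (x : vecF2 n) : nat := #|[set i : 'I_n | x 0 i != 0]|.

(* d is the minimum distance (= minimum nonzero weight) of the linear code C *)
Definition is_min_dist n (C : {vspace vecF2 n}) (d : nat) : Prop :=
  (exists2 c, c \in C & (c != 0) && (wt c == d)%N) /\
  (forall c, c \in C -> c != 0 -> (d <= wt c)%N).

Definition even_like_vec n (x : vecF2 n) : bool := \sum_(i < n) x 0 i == 0.
Definition even_like n (C : {vspace vecF2 n}) : Prop :=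
  forall c, c \in C -> even_like_vec c.

Definition ones n : vecF2 n := const_mx 1.
Definition rep_code n : {vspace vecF2 n} := <[ones n]>%VS.

(* Euclidean dual: the subspace spanned by (= equal to) the set of all x
   orthogonal to every codeword of C *)
Definition dualE n (C : {vspace vecF2 n}) : {vspace vecF2 n} :=
  <<[seq x <- enum [set: vecF2 n] |
     [forall y : vecF2 n, (y \in C) ==> (edot x y == 0%R)]]>>%VS.

Definition hullE n (C : {vspace vecF2 n}) : {vspace vecF2 n} :=
  (C :&: dualE C)%VS.

(* The (u | u+v) construction: the subspace spanned by (= equal to) the set
   {(u, u+v) : u in C1, v in C2} *)
Definition uuv n (C1 C2 : {vspace vecF2 n}) : {vspace vecF2 (n + n)} :=
  <<[seq row_mx u (u + v) |
      u <- [seq x <- enum [set: vecF2 n] | x \in C1],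
      v <- [seq x <- enum [set: vecF2 n] | x \in C2]]>>%VS.

From HB Require Import structures.
From mathcomp Require Import all_boot all_order all_algebra all_field.
Set Implicit Arguments. Unset Strict Implicit. Unset Printing Implicit Defensive.
Import GRing.Theory.
Local Open Scope ring_scope.

(* C is the image of C1 x F_2 under the injective linear map
   (u, b) |-> (u, u + b 1), whence its dimension. The word (u, u) has weight
   2 wt(u) and (u, u + 1) has weight n, whence the minimum distance. For
   even-like u and u' the inner product of (u, u + b 1) and (u', u' + b' 1) is
   b b' n, so the hull is the image of C1 x {b | b n = 0}, and
   {b | b n = 0} is {0} for odd n and all of F_2 for even n. *)

Lemma F2_cases (x : 'F_2) : x = 0 \/ x = 1.
Proof. by case: x => [[|[|]]] //= lt_x2; [left | right]; apply: val_inj. Qed.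

Lemma F2_natr_odd n : n%:R = (odd n)%:R :> 'F_2.
Proof.
by rewrite -[n in LHS]odd_double_half natrD -mul2n natrM
  (pchar_Fp_0 (isT : prime 2)) mul0r addr0.
Qed.

Lemma card_F2_annihilator n :
  #|[set b : 'F_2 | b * n%:R == 0]| = (if odd n then 1 else 2)%N.
Proof.
rewrite F2_natr_odd; case: (odd n).
  have -> : [set b : 'F_2 | b * true%:R == 0] = [set 0].
    by apply/setP => b; rewrite !inE mulr1.
  exact: cards1.
have -> : [set b : 'F_2 | b * false%:R == 0] = setT.
  by apply/setP => b; rewrite !inE mulr0 eqxx.
by rewrite cardsT card_Fp.
Qed.

Lemma dimv_F2 n (V : {vspace vecF2 n}) k : #|V| = (2 ^ k)%N -> \dim V = k.
Proof. by rewrite card_vspace card_Fp //; apply: expnI. Qed.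

Lemma rowv_neq0_gt0 (R : nmodType) n (x : 'rV[R]_n) : x != 0 -> (0 < n)%N.
Proof. by case: n x => // x; rewrite [x]thinmx0 eqxx. Qed.

Lemma wtE n (x : vecF2 n) : wt x = (\sum_(i < n) (x 0%R i != 0%R))%N.
Proof.
by rewrite /wt -sum1_card big_mkcond; apply: eq_bigr => i _; rewrite inE.
Qed.

Lemma wt_eq0 n (x : vecF2 n) : (wt x == 0%N) = (x == 0).
Proof.
rewrite /wt cards_eq0; apply/eqP/eqP => [/setP x0 | ->].
  by apply/rowP => i; move: (x0 i); rewrite !inE mxE => /negbFE/eqP.
by apply/setP => i; rewrite !inE mxE eqxx.
Qed.

Lemma wt_row_mx n m (x : vecF2 n) (y : vecF2 m) :
  wt (row_mx x y) = (wt x + wt y)%N.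
Proof.
rewrite !wtE big_split_ord; congr addn.
  by apply: eq_bigr => i _; rewrite row_mxEl.
by apply: eq_bigr => i _; rewrite row_mxEr.
Qed.

Lemma wt_add_ones n (x : vecF2 n) : (wt x + wt (x + ones n))%N = n.
Proof.
rewrite !wtE -big_split -[n in RHS]card_ord -sum1_card; apply: eq_bigr => i _.
by rewrite !mxE; case: (F2_cases (x 0 i)) => ->.
Qed.

Lemma edotE n (x y : vecF2 n) : edot x y = (x *m y^T) 0 0.
Proof. by rewrite mxE; apply: eq_bigr => i _; rewrite mxE. Qed.

Lemma edotC n : commutative (@edot n).
Proof. by move=> x y; apply: eq_bigr => i _; rewrite mulrC. Qed.

Lemma edotDl n (x y z : vecF2 n) : edot (x + y) z = edot x z + edot y z.
Proof. by rewrite !edotE mulmxDl mxE. Qed.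

Lemma edotZl n k (x y : vecF2 n) : edot (k *: x) y = k * edot x y.
Proof. by rewrite !edotE -scalemxAl mxE. Qed.

Lemma edotDr n (x y z : vecF2 n) : edot x (y + z) = edot x y + edot x z.
Proof. by rewrite edotC edotDl !(edotC x). Qed.

Lemma edotZr n k (x y : vecF2 n) : edot x (k *: y) = k * edot x y.
Proof. by rewrite edotC edotZl (edotC x). Qed.

Lemma edot_row_mx n m (x y : vecF2 n) (x' y' : vecF2 m) :
  edot (row_mx x x') (row_mx y y') = edot x y + edot x' y'.
Proof. by rewrite !edotE tr_row_mx mul_row_col mxE. Qed.

Lemma edot_ones n (x : vecF2 n) : edot x (ones n) = \sum_(i < n) x 0 i.
Proof. by apply: eq_bigr => i _; rewrite mxE mulr1. Qed.

Lemma edot_ones_ones n : edot (ones n) (ones n) = n%:R.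
Proof.
by rewrite edot_ones; under eq_bigr do rewrite mxE; rewrite sumr_const card_ord.
Qed.

Lemma span_closedE (K : fieldType) (vT : vectType K) (P : {pred vT}) X :
    0 \in P -> (forall k x y, x \in P -> y \in P -> k *: x + y \in P) ->
    {subset X <= P} -> {subset P <= X} -> <<X>>%VS =i P.
Proof.
move=> P0 P_lin sXP sPX x; apply/idP/idP => [|/sPX/memv_span //].
elim: X sXP {sPX} x => [|v X IH] sXP x.
  by rewrite span_nil memv0 => /eqP ->.
rewrite span_cons => /memv_addP [_ /vlineP [k ->] [y y_in ->]].
apply: P_lin; first by apply: sXP; rewrite mem_head.
by apply: IH y_in => z z_in; apply/sXP/mem_behead.
Qed.

Lemma mem_dualE n (C : {vspace vecF2 n}) x :
  reflect (forall y, y \in C -> edot x y = 0) (x \in dualE C).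
Proof.
pose P := [pred x : vecF2 n | [forall y in C, edot x y == 0]].
have -> : x \in dualE C = P x.
  apply: (span_closedE (P := P)) => [|k y z | y | y Py].
  - by apply/forall_inP => y _; rewrite edotE mul0mx mxE.
  - move=> /forall_inP Py /forall_inP Pz; apply/forall_inP => w w_in.
    by rewrite edotDl edotZl (eqP (Py w w_in)) (eqP (Pz w w_in)) mulr0 addr0.
  - by rewrite mem_filter => /andP [].
  - by rewrite mem_filter mem_enum inE andbT.
by apply: (iffP forall_inP) => orth y /orth; [move/eqP | move->].
Qed.

Section UUVRepetition.

Variables (n : nat) (C1 : {vspace vecF2 n}).

Definition uuv_ones (u : vecF2 n) (b : 'F_2) : vecF2 (n + n) :=
  row_mx u (u + b *: ones n).

Lemma uuv_ones0 : uuv_ones 0 0 = 0.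
Proof. by rewrite /uuv_ones scale0r addr0 row_mx0. Qed.

Lemma uuv_onesDZ k u u' b b' :
  uuv_ones (k *: u + u') (k * b + b') = k *: uuv_ones u b + uuv_ones u' b'.
Proof.
rewrite /uuv_ones scale_row_mx add_row_mx; congr row_mx.
by rewrite scalerDr scalerDl scalerA addrACA.
Qed.

Lemma uuv_ones_inj : (0 < n)%N -> injective (uncurry uuv_ones).
Proof.
move=> n_gt0 [u b] [u' b'] /eq_row_mx [/= <-] /addrI /rowP /(_ (Ordinal n_gt0)).
by rewrite !mxE !mulr1 => ->.
Qed.

Lemma wt_uuv_ones0 u : wt (uuv_ones u 0) = (2 * wt u)%N.
Proof. by rewrite wt_row_mx scale0r addr0 mul2n addnn. Qed.

Lemma wt_uuv_ones1 u : wt (uuv_ones u 1) = n.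
Proof. by rewrite wt_row_mx scale1r wt_add_ones. Qed.

Lemma edot_uuv_ones u u' b b' : even_like_vec u -> even_like_vec u' ->
  edot (uuv_ones u b) (uuv_ones u' b') = b * b' * n%:R.
Proof.
rewrite /even_like_vec -!edot_ones => /eqP u1 /eqP u'1.
rewrite edot_row_mx edotDl !edotDr !edotZl !edotZr (edotC (ones n)) u1 u'1.
rewrite edot_ones_ones !mulr0 !addr0 add0r addrA mulrA.
by rewrite (addrr_pchar2 (pchar_Fp (isT : prime 2))) add0r.
Qed.

Definition uuv_ones_img (B : {set 'F_2}) : {set vecF2 (n + n)} :=
  [set uuv_ones u b | u in [set u | u \in C1], b in B].

Lemma uuv_ones_img_f (B : {set 'F_2}) u b :
  u \in C1 -> b \in B -> uuv_ones u b \in uuv_ones_img B.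
Proof. by move=> u_in b_in; apply: imset2_f; rewrite ?inE. Qed.

Lemma card_uuv_ones_img B :
  (0 < n)%N -> #|uuv_ones_img B| = (2 ^ \dim C1 * #|B|)%N.
Proof.
move=> n_gt0; rewrite /uuv_ones_img curry_imset2X card_imset.
  by rewrite cardsX cardsE card_vspace card_Fp.
exact: uuv_ones_inj.
Qed.

Local Notation C := (uuv C1 (rep_code n)).

Lemma mem_uuv_rep : C =i uuv_ones_img setT.
Proof.
apply: span_closedE => [|k x y | x | x].
- by rewrite -uuv_ones0 uuv_ones_img_f ?inE ?mem0v.
- case/imset2P => u b + _ -> /imset2P [u' b' + _ ->]; rewrite !inE => u_in u'_in.
  by rewrite -uuv_onesDZ uuv_ones_img_f ?inE ?memvD ?memvZ.
- case/allpairsP => [[u v] /= [+ + ->]]; rewrite !mem_filter.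
  by case/andP=> u_in _ /andP [/vlineP [b ->] _]; rewrite uuv_ones_img_f ?inE.
- case/imset2P => u b; rewrite inE => u_in _ ->.
  apply/allpairsP; exists (u, b *: ones n).
  by rewrite /= !(mem_filter _ _ (enum _)) !mem_enum !inE u_in memvZ ?memv_line.
Qed.

Lemma uuv_ones_in_dual u b : even_like C1 -> u \in C1 ->
  (uuv_ones u b \in dualE C) = (b * n%:R == 0).
Proof.
move=> C1_even u_in; apply/mem_dualE/eqP => [orth | bn0 y].
  have := orth (uuv_ones 0 1); rewrite edot_uuv_ones ?C1_even ?mem0v // mulr1.
  by apply; rewrite mem_uuv_rep uuv_ones_img_f ?inE ?mem0v.
rewrite mem_uuv_rep => /imset2P [u' b' + _ ->]; rewrite inE => u'_in.
by rewrite edot_uuv_ones ?C1_even // mulrAC bn0 mul0r.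
Qed.

Lemma mem_hullE_uuv_rep : even_like C1 ->
  hullE C =i uuv_ones_img [set b | b * n%:R == 0].
Proof.
move=> C1_even x; rewrite memv_cap mem_uuv_rep.
apply/andP/imset2P => [[/imset2P [u b + _ ->]] | [u b + + ->]];
  rewrite !inE => u_in.
  by rewrite uuv_ones_in_dual // => bn0; exists u b; rewrite ?inE.
by move=> bn0; rewrite uuv_ones_in_dual // bn0 uuv_ones_img_f ?inE.
Qed.

Lemma dim_uuv_rep : (0 < n)%N -> \dim C = (\dim C1).+1.
Proof.
move=> n_gt0; apply: dimv_F2.
rewrite (eq_card mem_uuv_rep) card_uuv_ones_img // cardsT card_Fp //.
by rewrite expnS mulnC.
Qed.

Lemma dim_hullE_uuv_rep : (0 < n)%N -> even_like C1 ->
  \dim (hullE C) = if odd n then \dim C1 else (\dim C1).+1.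
Proof.
move=> n_gt0 C1_even; apply: dimv_F2.
rewrite (eq_card (mem_hullE_uuv_rep C1_even)) card_uuv_ones_img //.
rewrite card_F2_annihilator.
by case: (odd n); rewrite ?muln1 // expnS mulnC.
Qed.

Lemma is_min_dist_uuv_rep d1 :
  is_min_dist C1 d1 -> is_min_dist C (minn (2 * d1)%N n).
Proof.
move=> [[c c_in /andP [c_nz /eqP wt_c]] wt_min].
have n_gt0 := rowv_neq0_gt0 c_nz.
split.
- have [le_2d_n | lt_n_2d] := leqP (2 * d1)%N n.
    exists (uuv_ones c 0); first by rewrite mem_uuv_rep uuv_ones_img_f ?inE.
    rewrite -wt_eq0 wt_uuv_ones0 wt_c eqxx andbT.
    by rewrite -wt_c mul2n double_eq0 wt_eq0.
  exists (uuv_ones 0 1); first by rewrite mem_uuv_rep uuv_ones_img_f ?inE ?mem0v.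
  by rewrite -wt_eq0 wt_uuv_ones1 eqxx andbT -lt0n.
- move=> x; rewrite mem_uuv_rep => /imset2P [u b + _ ->].
  rewrite inE => u_in.
  case: (F2_cases b) => ->; last by rewrite wt_uuv_ones1 geq_minr.
  rewrite -wt_eq0 wt_uuv_ones0 mul2n double_eq0 wt_eq0 => u_nz.
  by rewrite (leq_trans (geq_minl _ _)) // mul2n leq_double wt_min.
Qed.

End UUVRepetition.

Theorem theorem3 (n k1 d1 : nat) (C1 : {vspace vecF2 n}) :
  \dim C1 = k1 -> is_min_dist C1 d1 -> even_like C1 ->
  let C := uuv C1 (rep_code n) in
  [/\ \dim C = (k1 + 1)%N,
      is_min_dist C (minn (2 * d1) n) &
      \dim (hullE C) = (if odd n then k1 else k1 + 1)%N].
Proof.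
move=> <- C1_min_dist C1_even C.
have [[c _ /andP [c_nz _]] _] := C1_min_dist.
have n_gt0 := rowv_neq0_gt0 c_nz.
split; first by rewrite dim_uuv_rep // addn1.
  exact: is_min_dist_uuv_rep.
by rewrite dim_hullE_uuv_rep // addn1.
Qed.
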